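(* Let $U\subset\mathbb{R}^2$ be open, let $x:U\to\mathbb{R}^3$ be smooth and let $\xi:U\to S^2$ be a frontal. Let $\Omega$ be a tangent moving basis of $\xi$, let $D\xi=\Omega\Delta_\Omega^T$, and let $q\in U\setminus\Sigma(\xi)$. Then for every $b=(b_1,b_2)^T\in\mathbb{R}^2\setminus\{0\}$, setting $a^T=(a_1,a_2)=b^T\Delta_\Omega(q)^{-1}$ and $\delta_\Omega=\det\Delta_\Omega(q)$, one has $$\delta_\Omega\,\mathscr{K}_q(a_1,a_2)=\mathscr{K}_q^{\Omega}(b_1,b_2).$$
   Context: A smooth map $f:U\to\mathbb{R}^3$ is a frontal if locally there is a smooth unit vector field along $f$ orthogonal to $f_{u_1},f_{u_2}$; $\Sigma(f)=\{u\in U: f \text{ is not immersive at } u\}$. A tangent moving basis of $\xi$ is a smooth $\Omega=(w_1\ w_2):U\to M_{3\times2}(\mathbb{R})$ with linearly independent columns such that $\xi_{u_1},\xi_{u_2}\in\mathrm{span}(w_1,w_2)$; then $D\xi=\Omega\Delta_\Omega^T$ for a unique smooth $2\times 2$ matrix valued $\Delta_\Omega$, and $\Sigma(\xi)=(\det\Delta_\Omega)^{-1}(0)$. Kummer matrices: $\boldsymbol{\mathcal{I}}=D\xi^TD\xi$, $\boldsymbol{\mathcal{II}}=-D\xi^TDx$; $\Omega$-Kummer matrices: $\boldsymbol{\mathcal{I}}_\Omega=\Omega^T\Omega$, $\boldsymbol{\mathcal{II}}_\Omega=-\Omega^TDx$. For $q\notin\Sigma(\xi)$ and $a\in\mathbb{R}^2\setminus\{0\}$,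 $\mathscr{K}_q(a)=\dfrac{a^T\boldsymbol{\mathcal{II}}(q)a}{a^T\boldsymbol{\mathcal{I}}(q)a}$. The $\Omega$-Kummer curvature function is $\mathscr{K}_q^\Omega(b)=\dfrac{b^T\boldsymbol{\mathcal{II}}_\Omega(q)\,\mathrm{adj}(\Delta_\Omega(q)^T)\,b}{b^T\boldsymbol{\mathcal{I}}_\Omega(q)b}$ for $b\in\mathbb{R}^2\setminus\{0\}$, where $\mathrm{adj}$ is the adjugate matrix. *)

From HB Require Import structures.
From mathcomp Require Import all_boot all_order all_algebra.
From mathcomp Require Import all_classical all_reals all_analysis.
Set Implicit Arguments. Unset Strict Implicit. Unset Printing Implicit Defensive.
Import Order.TTheory GRing.Theory Num.Theory.
Import numFieldNormedType.Exports.
Local Open Scope classical_set_scope.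
Local Open Scope ring_scope.

Section Defs.
Variable R : realType.

Fixpoint iter_deriv {V W : normedModType R} (vs : seq V) (f : V -> W) : V -> W :=
  match vs with
  | [::] => f
  | v :: vs' => fun x => 'D_v (iter_deriv vs' f) x
  end.

Definition smooth_on {V W : normedModType R} (U : set V) (f : V -> W) : Prop :=
  forall (vs : seq V) (u : V), U u -> differentiable (iter_deriv vs f) u.

Definition ebase (n : nat) (j : 'I_n) : 'rV[R]_n := delta_mx 0 j.

Definition jac (n m : nat) (f : 'rV[R]_n -> 'cV[R]_m) (u : 'rV[R]_n) : 'M[R]_(m, n) :=
  \matrix_(i < m, j < n) ('D_(ebase j) f u) i 0.

Definition dotc (m : nat) (v w : 'cV[R]_m) : R := (v^T *m w) 0 0.

Definition immersive_at (f : 'rV[R]_2 -> 'cV[R]_3) (u : 'rV[R]_2) : Prop :=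
  \rank (jac f u) = 2%N.

Definition frontal (U : set 'rV[R]_2) (f : 'rV[R]_2 -> 'cV[R]_3) : Prop :=
  smooth_on U f /\
  forall p, U p -> exists (V : set 'rV[R]_2) (nu : 'rV[R]_2 -> 'cV[R]_3),
    [/\ open V, V p, V `<=` U, smooth_on V nu &
      forall u, V u -> dotc (nu u) (nu u) = 1 /\
        forall j : 'I_2, dotc (nu u) (col j (jac f u)) = 0].

Definition tangent_moving_basis (U : set 'rV[R]_2) (xi : 'rV[R]_2 -> 'cV[R]_3)
    (Om : 'rV[R]_2 -> 'M[R]_(3, 2)) : Prop :=
  smooth_on U Om /\
  forall u, U u -> \rank (Om u) = 2%N /\
    forall j : 'I_2, exists c : 'cV[R]_2, col j (jac xi u) = Om u *m c.

Definition qform (M : 'M[R]_2) (a : 'cV[R]_2) : R := (a^T *m M *m a) 0 0.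

Definition kummerI (xi : 'rV[R]_2 -> 'cV[R]_3) (q : 'rV[R]_2) : 'M[R]_2 :=
  (jac xi q)^T *m jac xi q.
Definition kummerII (x xi : 'rV[R]_2 -> 'cV[R]_3) (q : 'rV[R]_2) : 'M[R]_2 :=
  - ((jac xi q)^T *m jac x q).
Definition kummerI_Om (Om : 'rV[R]_2 -> 'M[R]_(3, 2)) (q : 'rV[R]_2) : 'M[R]_2 :=
  (Om q)^T *m Om q.
Definition kummerII_Om (x : 'rV[R]_2 -> 'cV[R]_3) (Om : 'rV[R]_2 -> 'M[R]_(3, 2))
    (q : 'rV[R]_2) : 'M[R]_2 :=
  - ((Om q)^T *m jac x q).

Definition kummer_curv (x xi : 'rV[R]_2 -> 'cV[R]_3) (q : 'rV[R]_2) (a : 'cV[R]_2) : R :=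
  qform (kummerII x xi q) a / qform (kummerI xi q) a.

Definition kummer_curv_Om (x : 'rV[R]_2 -> 'cV[R]_3) (Om : 'rV[R]_2 -> 'M[R]_(3, 2))
    (Delta : 'rV[R]_2 -> 'M[R]_2) (q : 'rV[R]_2) (b : 'cV[R]_2) : R :=
  qform (kummerII_Om x Om q *m \adj ((Delta q)^T)) b / qform (kummerI_Om Om q) b.

End Defs.

(* The identity is pointwise linear algebra at q.  Since D xi = Omega Delta^T
   and xi is immersive at q, Delta(q) is invertible, and a = Delta^-T b turns
   D xi a into Omega b; hence the first Kummer forms agree at a and b.  Since
   adj(Delta^T) = delta Delta^-T, we get adj(Delta^T) b = delta a, so the
   Omega-second form at b is delta times the second form at a. *)

From HB Require Import structures.
From mathcomp Require Import all_boot all_order all_algebra.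
From mathcomp Require Import all_classical all_reals all_analysis.
Import Order.TTheory GRing.Theory Num.Theory.
Import numFieldNormedType.Exports.
Set Implicit Arguments. Unset Strict Implicit.
Local Open Scope classical_set_scope.
Local Open Scope ring_scope.

Lemma unitmx_of_rank_mulmx (F : fieldType) (m n : nat)
    (A : 'M[F]_(m, n)) (B : 'M[F]_n) :
  \rank (A *m B) = n -> B \in unitmx.
Proof.
move=> rkAB; rewrite -row_free_unit /row_free eqn_leq rank_leq_row /=.
by rewrite -{1}rkAB mxrankM_maxr.
Qed.

Lemma adj_unitmxE (R : comUnitRingType) (n : nat) (A : 'M[R]_n) :
  A \in unitmx -> \adj A = \det A *: invmx A.
Proof.
move=> uA; have udet : \det A \is a GRing.unit by rewrite -unitmxE.
by rewrite /invmx uA scalerA mulrV // scale1r.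
Qed.

Lemma trmx_mulmx_sandwich (R : comPzSemiRingType) (k m n : nat)
    (A : 'M[R]_(k, m)) (B : 'M[R]_(k, n)) (a : 'cV[R]_m) (c : 'cV[R]_n) :
  a^T *m (A^T *m B) *m c = (A *m a)^T *m (B *m c).
Proof. by rewrite trmx_mul !mulmxA. Qed.

Section KummerChangeOfFrame.

Variables (R : realType) (x xi : 'rV[R]_2 -> 'cV[R]_3).
Variables (Om : 'rV[R]_2 -> 'M[R]_(3, 2)) (Delta : 'rV[R]_2 -> 'M[R]_2).
Variable q : 'rV[R]_2.
Hypothesis jac_xi_q : jac xi q = Om q *m (Delta q)^T.
Hypothesis xi_immersive : immersive_at xi q.

Lemma Delta_unitmx : Delta q \in unitmx.
Proof.
rewrite -unitmx_tr; apply: (@unitmx_of_rank_mulmx _ _ _ (Om q)).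
by rewrite -jac_xi_q.
Qed.

Lemma jac_mul_frame_coords (b : 'cV[R]_2) :
  jac xi q *m ((invmx (Delta q))^T *m b) = Om q *m b.
Proof.
by rewrite jac_xi_q trmx_inv mulmxA mulmxK // unitmx_tr Delta_unitmx.
Qed.

Lemma qform_kummerI (b : 'cV[R]_2) :
  qform (kummerI xi q) ((invmx (Delta q))^T *m b) = qform (kummerI_Om Om q) b.
Proof.
by rewrite /qform /kummerI /kummerI_Om !trmx_mulmx_sandwich jac_mul_frame_coords.
Qed.

Lemma qform_kummerII (b : 'cV[R]_2) :
  qform (kummerII_Om x Om q *m \adj (Delta q)^T) b
  = \det (Delta q) * qform (kummerII x xi q) ((invmx (Delta q))^T *m b).
Proof.
have adj_b : \adj (Delta q)^T *m b = \det (Delta q) *: ((invmx (Delta q))^T *m b).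
  by rewrite -trmx_adj adj_unitmxE ?Delta_unitmx // linearZ scalemxAl.
rewrite /qform /kummerII /kummerII_Om mulmxA -[_ *m \adj _ *m b]mulmxA adj_b.
rewrite -scalemxAr mxE.
by rewrite !mulmxN !mulNmx !trmx_mulmx_sandwich jac_mul_frame_coords.
Qed.

End KummerChangeOfFrame.

Theorem proposition4p2 (R : realType) (U : set 'rV[R]_2)
    (x xi : 'rV[R]_2 -> 'cV[R]_3) (Om : 'rV[R]_2 -> 'M[R]_(3, 2))
    (Delta : 'rV[R]_2 -> 'M[R]_2) (q : 'rV[R]_2) :
  open U ->
  smooth_on U x ->
  (forall u, U u -> dotc (xi u) (xi u) = 1) ->
  frontal U xi ->
  tangent_moving_basis U xi Om ->
  (forall u, U u -> jac xi u = Om u *m (Delta u)^T) ->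
  U q -> immersive_at xi q ->
  forall b : 'cV[R]_2, b != 0 ->
    let a := (invmx (Delta q))^T *m b in
    \det (Delta q) * kummer_curv x xi q a = kummer_curv_Om x Om Delta q b.
Proof.
move=> _ _ _ _ _ jac_xi Uq imm b _ a.
have jac_xi_q := jac_xi q Uq.
rewrite /kummer_curv_Om /kummer_curv /a.
by rewrite (qform_kummerI jac_xi_q imm) (qform_kummerII x jac_xi_q imm) mulrA.
Qed.
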